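(* Let $N\ge3$ and define $s(r)=\left((N-2)\int_r^\infty(\sinh\sigma)^{1-N}d\sigma\right)^{-\frac{1}{N-2}}$ for $r>0$ (so that $\frac{ds}{s^{N-1}}=\frac{dr}{(\sinh r)^{N-1}}$). Then there exist positive constants $c_1,c_2$ such that $$s(r)=c_1e^{\frac{N-1}{N-2}r}-c_2e^{-\frac{N-3}{N-2}r}+o\!\left(e^{-\frac{N-3}{N-2}r}\right)\quad\text{as }r\to\infty.$$ *)

From Stdlib Require Import Reals.
From Coquelicot Require Import Coquelicot.
Open Scope R_scope.

Definition tail_int (N : nat) (r : R) : R :=
  RInt_gen (fun sigma => / (sinh sigma ^ (N - 1))) (at_point r) (Rbar_locally p_infty).

Definition s_fun (N : nat) (r : R) : R :=
  Rpower ((INR N - 2) * tail_int N r) (- / (INR N - 2)).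

From Stdlib Require Import Reals Lra Lia Psatz Classical.
From Coquelicot Require Import Coquelicot.
Open Scope R_scope.

(* Write q = exp (- r), n = N - 1 and m = N - 2.  Since
   (sinh s)^(-n) = 2^n e^(-ns) (1 - e^(-2s))^(-n) = 2^n e^(-ns) (1 + n e^(-2s) + O(e^(-4s))),
   integrating termwise gives tail_int N r = B q^n (1 + x) with x = a q^2 + O(q^4),
   B = 2^n / n and a = n^2 / (n + 2).  Then s = (m B q^n (1 + x))^(-1/m)
   = c1 e^(nr/m) (1 - x/m + O(x^2)) = c1 e^(nr/m) - c1 (a/m) e^(nr/m) q^2 + O(e^(nr/m) q^4),
   and e^(nr/m) q^2 = e^(-(N-3)r/(N-2)). *)

Lemma exp_mult_INR (k : nat) (x : R) : exp (INR k * x) = exp x ^ k.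
Proof.
induction k as [|k IH].
- now rewrite Rmult_0_l, exp_0.
- rewrite S_INR, Rmult_plus_distr_r, Rmult_1_l, exp_plus, IH. simpl. ring.
Qed.

Lemma is_lim_exp_opp : is_lim (fun r => exp (- r)) p_infty 0.
Proof.
apply (is_lim_comp exp Ropp p_infty 0 m_infty).
- exact is_lim_exp_m.
- apply (is_lim_opp id p_infty p_infty), is_lim_id.
- now exists 0.
Qed.

Lemma is_lim_0_of_exp_bound (g : R -> R) (K r0 : R) :
  (forall r, r0 <= r -> Rabs (g r) <= K * exp (- r)) -> is_lim g p_infty 0.
Proof.
intros hg.
apply (is_lim_le_le_loc (fun r => - (K * exp (- r))) (fun r => K * exp (- r))).
- exists r0. intros r hr. apply Rabs_le_between, hg. lra.
- replace (Finite 0) with (Rbar_opp (Rbar_mult K 0)) by (simpl; f_equal; ring).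
  apply is_lim_opp, is_lim_scal_l, is_lim_exp_opp.
- replace (Finite 0) with (Rbar_mult K 0) by (simpl; f_equal; ring).
  apply is_lim_scal_l, is_lim_exp_opp.
Qed.

Lemma exp_second_order_bounds (y : R) : y <= 1/2 -> 0 <= exp y - 1 - y <= 2 * y ^ 2.
Proof.
intros hy.
pose proof (exp_ineq1_le y). pose proof (exp_ineq1_le (- y)). pose proof (exp_pos y).
assert (exp y * exp (- y) = 1) by (rewrite <- exp_plus, Rplus_opp_r; apply exp_0).
assert (exp y * (1 - y) <= 1) by nra.
assert (1 <= (1 + y + 2 * y ^ 2) * (1 - y)) by nra.
split; nra.
Qed.

Lemma ln_1plus_second_order_bounds (x : R) : -1/2 <= x -> x - 2 * x ^ 2 <= ln (1 + x) <= x.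
Proof.
intros hx. split.
- set (L := ln (1 + x)).
  assert (hL : exp (- L) * (1 + x) = 1).
  { unfold L. rewrite exp_Ropp, exp_ln by lra. field. lra. }
  pose proof (exp_ineq1_le (- L)).
  assert (0 <= x ^ 2 * (1 + 2 * x)) by (apply Rmult_le_pos; nra).
  nra.
- rewrite <- (ln_exp x) at 2. apply ln_le; [lra|]. pose proof (exp_ineq1_le x). lra.
Qed.

Lemma Rpower_1plus_second_order (e x : R) : Rabs e <= 1 -> Rabs x <= 1/4 ->
  Rabs (Rpower (1 + x) e - 1 - e * x) <= 10 * x ^ 2.
Proof.
intros he hx. apply Rabs_le_between in he, hx.
destruct (ln_1plus_second_order_bounds x ltac:(lra)) as [l1 l2].
set (y := e * ln (1 + x)).
assert (hdiff : Rabs (y - e * x) <= 2 * x ^ 2).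
{ apply Rabs_le_between. unfold y. split; nra. }
assert (hL2 : ln (1 + x) ^ 2 <= 4 * x ^ 2).
{ assert (-2 * Rabs x <= ln (1 + x) <= 2 * Rabs x) by (split_Rabs; nra).
  replace (4 * x ^ 2) with ((2 * Rabs x) ^ 2) by (rewrite <- (pow2_abs x); ring).
  pose proof (Rabs_pos x). nra. }
assert (hy2 : y ^ 2 <= 4 * x ^ 2).
{ unfold y. rewrite Rpow_mult_distr.
  assert (e ^ 2 <= 1) by nra. pose proof (pow2_ge_0 (ln (1 + x))). nra. }
destruct (exp_second_order_bounds y ltac:(unfold y; nra)) as [t1 t2].
unfold Rpower. fold y. apply Rabs_le_between in hdiff. apply Rabs_le_between. nra.
Qed.

Lemma binomial_second_order (n : nat) : exists K, 0 <= K /\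
  forall v, 0 <= v <= 1 -> 1 + INR n * v <= (1 + v) ^ n <= 1 + INR n * v + K * v ^ 2.
Proof.
induction n as [|n [K [hK IH]]].
- exists 0. split; [lra|]. intros v _. simpl. lra.
- exists (INR n + 2 * K). pose proof (pos_INR n). split; [lra|].
  intros v hv. destruct (IH v hv). rewrite S_INR. simpl. split; nra.
Qed.

Lemma exp_opp_le_half (s : R) : 1 <= s -> exp (- s) <= 1/2.
Proof.
intros hs. rewrite exp_Ropp. pose proof (exp_ineq1_le s).
replace (1/2) with (/ 2) by field. apply Rinv_le_contravar; lra.
Qed.

Lemma sinh_pos (x : R) : 0 < x -> 0 < sinh x.
Proof. intros hx. rewrite <- sinh_0. now apply sinh_lt. Qed.

Lemma inv_sinh_pow_eq (n : nat) (s : R) : 0 < s ->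
  / sinh s ^ n = (2 * exp (- s)) ^ n * (1 + exp (- s) ^ 2 / (1 - exp (- s) ^ 2)) ^ n.
Proof.
intros hs. rewrite <- Rpow_mult_distr, <- pow_inv. f_equal.
assert (hq : exp (- s) < 1) by (rewrite <- exp_0; apply exp_increasing; lra).
pose proof (exp_pos (- s)).
unfold sinh. rewrite <- (Rinv_inv (exp s)), <- exp_Ropp.
field. split; nra.
Qed.

Definition inv_sinh_pow_expansion (n : nat) (c s : R) : R :=
  2 ^ n * (exp (- s) ^ n + INR n * exp (- s) ^ (n + 2) + c * exp (- s) ^ (n + 4)).

Lemma inv_sinh_pow_expansion_bounds (n : nat) : exists K, 0 <= K /\
  forall s, 1 <= s ->
  inv_sinh_pow_expansion n 0 s <= / sinh s ^ n <= inv_sinh_pow_expansion n K s.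
Proof.
destruct (binomial_second_order n) as [K [hK hbin]].
exists (2 * INR n + 4 * K). pose proof (pos_INR n). split; [lra|].
intros s hs. rewrite inv_sinh_pow_eq by lra. unfold inv_sinh_pow_expansion.
pose proof (exp_opp_le_half s hs). pose proof (exp_pos (- s)).
set (q := exp (- s)) in *.
set (v := q ^ 2 / (1 - q ^ 2)).
assert (hv : q ^ 2 <= v <= q ^ 2 + 2 * q ^ 4).
{ assert (v = q ^ 2 + q ^ 4 / (1 - q ^ 2)) by (unfold v; field; nra).
  assert (0 < / (1 - q ^ 2) <= 2).
  { split; [apply Rinv_0_lt_compat; nra|].
    replace 2 with (/ (1/2)) by field. apply Rinv_le_contravar; nra. }
  pose proof (pow_le q 4 ltac:(lra)). unfold Rdiv in *. nra. }
assert (hq2 : 0 <= q ^ 2 <= 1/4) by (split; nra).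
assert (hq4 : q ^ 4 <= 1/16) by (replace (q ^ 4) with (q ^ 2 * q ^ 2) by ring; nra).
assert (hv1 : 0 <= v <= 1) by lra.
destruct (hbin v hv1) as [b1 b2].
assert (hQ : 0 < 2 ^ n * q ^ n) by (apply Rmult_lt_0_compat; apply pow_lt; lra).
rewrite Rpow_mult_distr, !pow_add. split.
- replace (2 ^ n * (q ^ n + INR n * (q ^ n * q ^ 2) + 0 * (q ^ n * q ^ 4)))
    with (2 ^ n * q ^ n * (1 + INR n * q ^ 2)) by ring.
  apply Rmult_le_compat_l; nra.
- replace (2 ^ n * (q ^ n + INR n * (q ^ n * q ^ 2) + (2 * INR n + 4 * K) * (q ^ n * q ^ 4)))
    with (2 ^ n * q ^ n * (1 + INR n * q ^ 2 + (2 * INR n + 4 * K) * q ^ 4)) by ring.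
  apply Rmult_le_compat_l; [lra|].
  assert (v ^ 2 <= 4 * q ^ 4) by nra.
  nra.
Qed.

Definition inv_sinh_pow_expansion_tail (n : nat) (c r : R) : R :=
  2 ^ n * (exp (- r) ^ n / INR n + INR n * exp (- r) ^ (n + 2) / INR (n + 2)
           + c * exp (- r) ^ (n + 4) / INR (n + 4)).

Lemma is_RInt_exp_opp_pow (k : nat) (a b : R) : (0 < k)%nat ->
  is_RInt (fun s => exp (- s) ^ k) a b ((exp (- a) ^ k - exp (- b) ^ k) / INR k).
Proof.
intros hk. assert (0 < INR k) by (apply lt_0_INR; lia).
apply (is_RInt_ext (fun s => exp (- (INR k * s)))).
{ intros s _. rewrite <- exp_mult_INR. f_equal. ring. }
replace ((exp (- a) ^ k - exp (- b) ^ k) / INR k)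
  with (- exp (- (INR k * b)) / INR k - - exp (- (INR k * a)) / INR k).
2:{ rewrite <- !exp_mult_INR, !Ropp_mult_distr_r. field. lra. }
apply (is_RInt_derive (fun s => - exp (- (INR k * s)) / INR k)).
- intros s _. auto_derive; [easy|]. field. lra.
- intros s _. apply (ex_derive_continuous (fun s => exp (- (INR k * s)))). auto_derive. easy.
Qed.

Lemma is_RInt_inv_sinh_pow_expansion (n : nat) (c a b : R) : (0 < n)%nat ->
  is_RInt (inv_sinh_pow_expansion n c) a b
    (inv_sinh_pow_expansion_tail n c a - inv_sinh_pow_expansion_tail n c b).
Proof.
intros hn.
assert (0 < INR n) by (apply lt_0_INR; lia).
assert (0 < INR (n + 2)) by (apply lt_0_INR; lia).
assert (0 < INR (n + 4)) by (apply lt_0_INR; lia).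
evar (v : R).
replace (inv_sinh_pow_expansion_tail n c a - inv_sinh_pow_expansion_tail n c b) with v.
- apply (is_RInt_scal (V := R_NormedModule)).
  apply (is_RInt_plus (V := R_NormedModule)); [apply (is_RInt_plus (V := R_NormedModule))|].
  + apply is_RInt_exp_opp_pow, hn.
  + apply (is_RInt_scal (V := R_NormedModule)), is_RInt_exp_opp_pow. lia.
  + apply (is_RInt_scal (V := R_NormedModule)), is_RInt_exp_opp_pow. lia.
- unfold v, inv_sinh_pow_expansion_tail, scal, plus; simpl; unfold mult; simpl.
  field. lra.
Qed.

Lemma continuous_inv_sinh_pow (n : nat) (x : R) : 0 < x -> continuous (fun s => / sinh s ^ n) x.
Proof.
intros hx. pose proof (sinh_pos x hx).
apply (ex_derive_continuous (fun s => / sinh s ^ n)). unfold sinh in *. auto_derive.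
apply pow_nonzero. lra.
Qed.

Lemma inv_sinh_pow_expansion_tail_nonneg (n : nat) (c r : R) : (0 < n)%nat -> 0 <= c ->
  0 <= inv_sinh_pow_expansion_tail n c r.
Proof.
intros hn hc. unfold inv_sinh_pow_expansion_tail.
assert (0 < INR n) by (apply lt_0_INR; lia).
assert (0 < INR (n + 2)) by (apply lt_0_INR; lia).
assert (0 < INR (n + 4)) by (apply lt_0_INR; lia).
pose proof (exp_pos (- r)).
apply Rmult_le_pos; [apply pow_le; lra|].
repeat apply Rplus_le_le_0_compat; apply Rdiv_le_0_compat; try lra;
  repeat apply Rmult_le_pos; try apply pow_le; lra.
Qed.

Lemma is_lim_inv_sinh_pow_expansion_tail (n : nat) (c : R) : (0 < n)%nat ->
  is_lim (inv_sinh_pow_expansion_tail n c) p_infty 0.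
Proof.
intros hn.
set (P := fun q => 2 ^ n * (q ^ n / INR n + INR n * q ^ (n + 2) / INR (n + 2)
                            + c * q ^ (n + 4) / INR (n + 4))).
replace (Finite 0) with (Finite (P 0)).
- apply (is_lim_comp_continuous (fun r => exp (- r)) P p_infty 0 is_lim_exp_opp).
  apply (ex_derive_continuous P). unfold P. auto_derive. easy.
- unfold P. rewrite !pow_i by lia. f_equal. field.
  repeat split; apply not_0_INR; lia.
Qed.

Lemma RInt_le_RInt_of_nonneg (f : R -> R) (a b1 b2 : R) :
  a <= b1 <= b2 -> ex_RInt f a b2 -> (forall x, b1 <= x <= b2 -> 0 <= f x) ->
  RInt f a b1 <= RInt f a b2.
Proof.
intros hb hint hf.
assert (h1 : ex_RInt f a b1) by (apply (ex_RInt_Chasles_1 f a b1 b2); [lra|exact hint]).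
assert (h2 : ex_RInt f b1 b2) by (apply (ex_RInt_Chasles_2 f a b1 b2); [lra|exact hint]).
rewrite <- (RInt_Chasles f a b1 b2 h1 h2).
assert (0 <= RInt f b1 b2) by (apply RInt_ge_0; [lra|exact h2|intros; apply hf; lra]).
unfold plus; simpl. lra.
Qed.

Lemma is_RInt_gen_of_nonneg_bounded (f : R -> R) (r M : R) :
  (forall b, r <= b -> ex_RInt f r b) ->
  (forall x, r <= x -> 0 <= f x) ->
  (forall b, r <= b -> RInt f r b <= M) ->
  exists l, is_RInt_gen f (at_point r) (Rbar_locally p_infty) l /\ l <= M /\
    forall b, r <= b -> RInt f r b <= l.
Proof.
intros hint hf hM.
set (E := fun y => exists b, r <= b /\ y = RInt f r b).
destruct (completeness E) as [l [hub hlub]].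
{ exists M. intros y [b [hb ->]]. now apply hM. }
{ exists (RInt f r r), r. split; [lra|easy]. }
assert (hle : forall b, r <= b -> RInt f r b <= l) by (intros b hb; apply hub; now exists b).
exists l. split; [|split; [apply hlub; intros y [b [hb ->]]; now apply hM|exact hle]].
intros P [eps heps].
assert (hb0 : exists b0, r <= b0 /\ l - eps < RInt f r b0).
{ apply NNPP. intros hn.
  assert (l <= l - eps).
  { apply hlub. intros y [b [hb ->]]. apply Rnot_lt_le. intros hc. apply hn. now exists b. }
  destruct eps; simpl in *; lra. }
destruct hb0 as [b0 [hb0 hlt]].
apply (Filter_prod _ _ _ (fun x => x = r) (fun b => b0 < b)); [easy|now exists b0|].
intros x b -> hb. exists (RInt f r b). split.
- apply (RInt_correct (V := R_CompleteNormedModule)), hint. lra.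
- apply heps. change (Rabs (RInt f r b - l) < eps). apply Rabs_def1.
  + pose proof (hle b ltac:(lra)). destruct eps; simpl in *; lra.
  + pose proof (RInt_le_RInt_of_nonneg f r b0 b ltac:(lra) (hint b ltac:(lra))
      ltac:(intros; apply hf; lra)). lra.
Qed.

Lemma RInt_gen_inv_sinh_pow_bounds (n : nat) : (0 < n)%nat -> exists K, 0 <= K /\
  forall r, 1 <= r ->
  inv_sinh_pow_expansion_tail n 0 r
    <= RInt_gen (fun s => / sinh s ^ n) (at_point r) (Rbar_locally p_infty)
    <= inv_sinh_pow_expansion_tail n K r.
Proof.
intros hn. destruct (inv_sinh_pow_expansion_bounds n) as [K [hK hexp]].
exists K. split; [exact hK|]. intros r hr.
set (f := fun s => / sinh s ^ n).
assert (hint : forall b, r <= b -> ex_RInt f r b).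
{ intros b hb. apply (ex_RInt_continuous (V := R_CompleteNormedModule)).
  intros x hx. apply continuous_inv_sinh_pow. rewrite Rmin_left in hx; lra. }
assert (hlower : forall b, r <= b ->
  inv_sinh_pow_expansion_tail n 0 r - inv_sinh_pow_expansion_tail n 0 b <= RInt f r b).
{ intros b hb. rewrite <- (is_RInt_unique _ _ _ _ (is_RInt_inv_sinh_pow_expansion n 0 r b hn)).
  apply RInt_le; [lra| eexists; now apply is_RInt_inv_sinh_pow_expansion| now apply hint|].
  intros x hx. apply hexp. lra. }
assert (hupper : forall b, r <= b ->
  RInt f r b <= inv_sinh_pow_expansion_tail n K r - inv_sinh_pow_expansion_tail n K b).
{ intros b hb. rewrite <- (is_RInt_unique _ _ _ _ (is_RInt_inv_sinh_pow_expansion n K r b hn)).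
  apply RInt_le; [lra| now apply hint| eexists; now apply is_RInt_inv_sinh_pow_expansion|].
  intros x hx. apply hexp. lra. }
destruct (is_RInt_gen_of_nonneg_bounded f r (inv_sinh_pow_expansion_tail n K r))
  as [l [hl [hlM hlb]]].
- exact hint.
- intros x hx. apply Rlt_le, Rinv_0_lt_compat, pow_lt, sinh_pos. lra.
- intros b hb. pose proof (inv_sinh_pow_expansion_tail_nonneg n K b hn hK).
  pose proof (hupper b hb). lra.
- rewrite (is_RInt_gen_unique _ _ hl). split; [|exact hlM].
  assert (hlim : Rbar_le (inv_sinh_pow_expansion_tail n 0 r - 0) l).
  { apply (is_lim_le_loc (fun b => inv_sinh_pow_expansion_tail n 0 r - inv_sinh_pow_expansion_tail n 0 b)
      (fun _ => l) p_infty).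
    - exists r. intros b hb. pose proof (hlower b ltac:(lra)). pose proof (hlb b ltac:(lra)). lra.
    - apply is_lim_minus'; [apply is_lim_const|now apply is_lim_inv_sinh_pow_expansion_tail].
    - apply is_lim_const. }
  simpl in hlim. lra.
Qed.

Lemma exp_opp_le_inv (d r : R) : 0 < d -> ln d <= r -> exp (- r) <= / d.
Proof.
intros hd hr. rewrite <- (exp_ln d) by exact hd. rewrite <- exp_Ropp.
destruct (Rle_lt_or_eq_dec _ _ hr) as [h|h].
- apply Rlt_le, exp_increasing. lra.
- rewrite h. lra.
Qed.

Lemma Rpower_mult_exp_pow (m B x r : R) (n : nat) : 0 < m -> 0 < B -> -1 < x ->
  Rpower (m * (B * exp (- r) ^ n * (1 + x))) (- / m)
  = Rpower (m * B) (- / m) * exp (INR n / m * r) * Rpower (1 + x) (- / m).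
Proof.
intros hm hB hx. pose proof (pow_lt _ n (exp_pos (- r))).
replace (m * (B * exp (- r) ^ n * (1 + x))) with (m * B * exp (- r) ^ n * (1 + x)) by ring.
rewrite <- !Rpower_mult_distr by (repeat apply Rmult_lt_0_compat; lra).
replace (Rpower (exp (- r) ^ n) (- / m)) with (exp (INR n / m * r)); [reflexivity|].
unfold Rpower. rewrite ln_pow, ln_exp by apply exp_pos. f_equal. field. lra.
Qed.

Lemma Rpower_expansion_remainder (m a C D x q : R) : 1 <= m -> 0 < q ->
  Rabs (x - a * q ^ 2) <= C * q ^ 4 -> Rabs x <= D * q ^ 2 -> Rabs x <= 1/4 ->
  Rabs ((Rpower (1 + x) (- / m) - 1 + a / m * q ^ 2) / q ^ 2) <= (10 * D ^ 2 + C) * q ^ 2.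
Proof.
intros hm hq hE hD hx.
assert (hm' : 0 < / m <= 1).
{ split; [apply Rinv_0_lt_compat; lra|]. rewrite <- Rinv_1. apply Rinv_le_contravar; lra. }
assert (he : Rabs (- / m) <= 1) by (rewrite Rabs_Ropp, Rabs_right; lra).
pose proof (Rpower_1plus_second_order (- / m) x he hx) as htay.
assert (hq2 : 0 < q ^ 2) by (apply pow_lt; lra).
assert (hx2 : x ^ 2 <= D ^ 2 * q ^ 4).
{ rewrite <- pow2_abs. replace (D ^ 2 * q ^ 4) with ((D * q ^ 2) ^ 2) by ring.
  apply pow_incr. split; [apply Rabs_pos|exact hD]. }
assert (hC : 0 <= C * q ^ 4) by (eapply Rle_trans; [apply Rabs_pos|exact hE]).
unfold Rdiv at 1. rewrite Rabs_mult, Rabs_inv, (Rabs_right (q ^ 2)) by lra.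
apply (Rmult_le_reg_r (q ^ 2)); [lra|].
rewrite Rmult_assoc, Rinv_l, Rmult_1_r by lra.
replace (Rpower (1 + x) (- / m) - 1 + a / m * q ^ 2)
  with ((Rpower (1 + x) (- / m) - 1 - - / m * x) - / m * (x - a * q ^ 2)) by (field; lra).
eapply Rle_trans; [apply Rabs_triang|]. rewrite Rabs_Ropp, Rabs_mult, (Rabs_right (/ m)) by lra.
assert (/ m * Rabs (x - a * q ^ 2) <= C * q ^ 4) by (pose proof (Rabs_pos (x - a * q ^ 2)); nra).
replace ((10 * D ^ 2 + C) * q ^ 2 * q ^ 2) with (10 * (D ^ 2 * q ^ 4) + C * q ^ 4) by ring.
lra.
Qed.

(* c1 = (m B)^(-1/m) and c2 = c1 a / m in the notation of the header. *)
Definition s_fun_lead_coef (N : nat) : R :=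
  Rpower ((INR N - 2) * (2 ^ (N - 1) / INR (N - 1))) (- / (INR N - 2)).

Definition s_fun_second_coef (N : nat) : R :=
  s_fun_lead_coef N * (INR (N - 1) ^ 2 / INR (N + 1)) / (INR N - 2).

Section SFunExpansion.

Variable N : nat.
Hypothesis hN : (3 <= N)%nat.

Let n := (N - 1)%nat.
Let m := INR N - 2.
Let B := 2 ^ n / INR n.
Let a := INR n ^ 2 / INR (N + 1).

Fact INR_N_ge_3 : 3 <= INR N.
Proof. apply (le_INR 3) in hN. simpl in hN. lra. Qed.

Fact INR_N_sub_1 : INR n = INR N - 1.
Proof. unfold n. rewrite minus_INR by lia. simpl. ring. Qed.

Lemma tail_int_expansion : exists C, 0 <= C /\ forall r, 1 <= r ->
  Rabs (tail_int N r / (B * exp (- r) ^ n) - 1 - a * exp (- r) ^ 2) <= C * exp (- r) ^ 4.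
Proof.
assert (hn : (0 < n)%nat) by (unfold n; lia).
destruct (RInt_gen_inv_sinh_pow_bounds n hn) as [K [hK hT]].
pose proof INR_N_ge_3. pose proof INR_N_sub_1.
assert (hN1 : INR (n + 2) = INR (N + 1)) by (f_equal; unfold n; lia).
assert (0 < INR (n + 4)) by (apply lt_0_INR; lia).
exists (K * INR n / INR (n + 4)). split.
{ apply Rdiv_le_0_compat; [apply Rmult_le_pos; lra|lra]. }
intros r hr. destruct (hT r hr) as [hlo hhi].
pose proof (exp_pos (- r)). set (q := exp (- r)) in *.
assert (hB : 0 < B) by (unfold B; apply Rdiv_lt_0_compat; [apply pow_lt|]; lra).
assert (hqn : 0 < q ^ n) by (apply pow_lt; lra).
assert (hBq : 0 < B * q ^ n) by (apply Rmult_lt_0_compat; lra).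
assert (htail : forall c, inv_sinh_pow_expansion_tail n c r
          = B * q ^ n * (1 + a * q ^ 2 + c * INR n / INR (n + 4) * q ^ 4)).
{ intros c. unfold inv_sinh_pow_expansion_tail, B, a. fold q. rewrite <- hN1, !pow_add.
  field. repeat split; try lra. apply not_0_INR. lia. }
rewrite !htail in hlo, hhi. unfold tail_int. fold n.
set (T := RInt_gen _ _ _) in *.
assert (hdiv : T / (B * q ^ n) - 1 - a * q ^ 2 = (T - B * q ^ n * (1 + a * q ^ 2)) / (B * q ^ n)).
{ field. split; lra. }
rewrite hdiv. apply Rabs_le_between. split.
- apply Rle_trans with 0.
  + pose proof (pow_le q 4 ltac:(lra)). assert (0 <= K * INR n / INR (n + 4) * q ^ 4).
    { apply Rmult_le_pos; [apply Rdiv_le_0_compat; [apply Rmult_le_pos|]|]; lra. }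
    lra.
  + apply Rdiv_le_0_compat; lra.
- apply Rle_div_l; lra.
Qed.

Lemma s_fun_lead_coef_pos : 0 < s_fun_lead_coef N.
Proof. apply exp_pos. Qed.

Lemma s_fun_second_coef_pos : 0 < s_fun_second_coef N.
Proof.
pose proof INR_N_ge_3. pose proof INR_N_sub_1. pose proof s_fun_lead_coef_pos.
assert (0 < INR (N + 1)) by (apply lt_0_INR; lia).
unfold s_fun_second_coef. fold n.
apply Rdiv_lt_0_compat; [apply Rmult_lt_0_compat; [lra|]|lra].
apply Rdiv_lt_0_compat; [apply pow_lt|]; lra.
Qed.

Lemma s_fun_normalized_remainder (r x : R) : -1 < x ->
  tail_int N r = B * exp (- r) ^ n * (1 + x) ->
  (s_fun N r - s_fun_lead_coef N * exp ((INR N - 1) / (INR N - 2) * r)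
   + s_fun_second_coef N * exp (- ((INR N - 3) / (INR N - 2)) * r))
  / exp (- ((INR N - 3) / (INR N - 2)) * r)
  = s_fun_lead_coef N * ((Rpower (1 + x) (- / m) - 1 + a / m * exp (- r) ^ 2) / exp (- r) ^ 2).
Proof.
intros hx hTx.
pose proof INR_N_ge_3. pose proof INR_N_sub_1 as hn_eq.
assert (hB : 0 < B) by (unfold B; apply Rdiv_lt_0_compat; [apply pow_lt|]; lra).
assert (hs : s_fun N r = s_fun_lead_coef N * exp (INR n / m * r) * Rpower (1 + x) (- / m)).
{ unfold s_fun. fold m. rewrite hTx. apply Rpower_mult_exp_pow; unfold m; lra. }
assert (hE1 : (INR N - 1) / (INR N - 2) * r = INR n / m * r) by (unfold m; now rewrite hn_eq).
assert (hE2 : exp (- ((INR N - 3) / (INR N - 2)) * r) = exp (INR n / m * r) * exp (- r) ^ 2).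
{ rewrite <- (exp_mult_INR 2), <- exp_plus. f_equal. unfold m. rewrite hn_eq. simpl. field. lra. }
rewrite hs, hE1, hE2. change (s_fun_second_coef N) with (s_fun_lead_coef N * a / m).
pose proof (exp_pos (INR n / m * r)). pose proof (exp_pos (- r)).
assert (0 < m) by (unfold m; lra).
field. repeat split; lra.
Qed.

Lemma s_fun_remainder_bound : exists K r0, forall r, r0 <= r ->
  Rabs ((s_fun N r - s_fun_lead_coef N * exp ((INR N - 1) / (INR N - 2) * r)
         + s_fun_second_coef N * exp (- ((INR N - 3) / (INR N - 2)) * r))
        / exp (- ((INR N - 3) / (INR N - 2)) * r)) <= K * exp (- r).
Proof.
destruct tail_int_expansion as [C [hC hT]].
pose proof INR_N_ge_3. pose proof INR_N_sub_1. pose proof s_fun_lead_coef_pos.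
assert (ha : 0 <= a).
{ assert (0 < INR (N + 1)) by (apply lt_0_INR; lia).
  apply Rdiv_le_0_compat; [apply pow_le|]; lra. }
assert (hB : 0 < B) by (unfold B; apply Rdiv_lt_0_compat; [apply pow_lt|]; lra).
set (D := a + C). assert (hD : 0 <= D) by (unfold D; lra).
exists (s_fun_lead_coef N * (10 * D ^ 2 + C)), (Rmax 1 (ln (4 * D + 1))).
intros r hr.
assert (hr1 : 1 <= r) by (eapply Rle_trans; [apply Rmax_l|exact hr]).
assert (hqD : exp (- r) <= / (4 * D + 1)).
{ apply exp_opp_le_inv; [lra|]. eapply Rle_trans; [apply Rmax_r|exact hr]. }
pose proof (exp_opp_le_half r hr1). pose proof (exp_pos (- r)).
specialize (hT r hr1). set (q := exp (- r)) in *.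
assert (hqn : 0 < q ^ n) by (apply pow_lt; lra).
set (x := tail_int N r / (B * q ^ n) - 1). fold x in hT.
assert (hq4 : 0 <= q ^ 4 <= q ^ 2).
{ split; [apply pow_le; lra|]. replace (q ^ 4) with (q ^ 2 * q ^ 2) by ring.
  assert (0 <= q ^ 2 <= 1) by (split; nra). nra. }
assert (hxD : Rabs x <= D * q ^ 2).
{ apply Rabs_le_between in hT. apply Rabs_le_between. unfold D. nra. }
assert (hx4 : Rabs x <= 1/4).
{ assert (D * q <= 1/4).
  { apply Rle_trans with (D * / (4 * D + 1)); [now apply Rmult_le_compat_l|].
    apply Rle_div_l; lra. }
  assert (D * q ^ 2 <= D * q) by (apply Rmult_le_compat_l; nra). lra. }
rewrite (s_fun_normalized_remainder r x).
- rewrite Rabs_mult, (Rabs_right (s_fun_lead_coef N)), Rmult_assoc by lra.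
  apply Rmult_le_compat_l; [lra|].
  eapply Rle_trans; [apply (Rpower_expansion_remainder m a C D x q); unfold m; lra|].
  assert (0 <= 10 * D ^ 2 + C) by nra. apply Rmult_le_compat_l; nra.
- apply Rabs_le_between in hx4. lra.
- fold q. unfold x. field. split; lra.
Qed.

End SFunExpansion.

Theorem lemma6p4 (N : nat) (hN : (3 <= N)%nat) :
  exists c1 c2 : R, 0 < c1 /\ 0 < c2 /\
    is_lim
      (fun r => (s_fun N r
                 - c1 * exp ((INR N - 1) / (INR N - 2) * r)
                 + c2 * exp (- ((INR N - 3) / (INR N - 2)) * r))
                / exp (- ((INR N - 3) / (INR N - 2)) * r))
      p_infty 0.
Proof.
exists (s_fun_lead_coef N), (s_fun_second_coef N).
split; [apply s_fun_lead_coef_pos|]. split; [now apply s_fun_second_coef_pos|].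
destruct (s_fun_remainder_bound N hN) as [K [r0 hK]].
exact (is_lim_0_of_exp_bound _ K r0 hK).
Qed.
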